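(* Let $m<n$, let $A\in\mathbb{R}^{m\times n}$ and $b\in\mathbb{R}^{m}$, and assume that the system $Ax=b$ has a solution. Partition $A=[B~\tilde{B}]$ with $B\in\mathbb{R}^{m\times m}$ and $\tilde{B}\in\mathbb{R}^{m\times(n-m)}$. Assume that every diagonal entry of $B$ is nonzero and that every row $\tilde{B}_i$ of $\tilde{B}$ is nonzero. Let $D=\operatorname{diag}(B)$ (the diagonal matrix with the diagonal of $B$), $R=B-D$, $N(\tilde{B})=\operatorname{diag}(\|\tilde{B}_1\|_1,\ldots,\|\tilde{B}_m\|_1)$, and let $s(\tilde{B})\in\mathbb{R}^{(n-m)\times m}$ be the matrix whose $(j,i)$ entry is the sign ($1$, $0$ or $-1$) of the $(j,i)$ entry of $\tilde{B}^T$. Starting from any $x^{(0)}=\begin{bmatrix}x_1^{(0)}\\ x_2^{(0)}\end{bmatrix}$ with $x_1^{(0)}\in\mathbb{R}^m$, $x_2^{(0)}\in\mathbb{R}^{n-m}$, define for $k\ge 0$ the generalized Jacobi iteration $$x_2^{(k+1)}=x_2^{(k)}+s(\tilde{B})\,d^{(k)},\qquad d^{(k)}_i=\frac{b_i-B_ix_1^{(k)}-\tilde{B}_ix_2^{(k)}}{m\|\tilde{B}_i\|_1}\ (i=1,\ldots,m),$$ $$x_1^{(k+1)}=D^{-1}\big(-Rx_1^{(k)}+b-\tilde{B}x_2^{(k+1)}\big),\qquad x^{(k+1)}=\begin{bmatrix}x_1^{(k+1)}\\ x_2^{(k+1)}\end{bmatrix},$$ where $B_i,\tilde{B}_i$ denote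 the $i$th rows of $B,\tilde{B}$. If, for some matrix norm $\|\cdot\|$ on $\mathbb{R}^{m\times m}$, $$\|I-BD^{-1}\|<1\quad\text{and}\quad \|mI-\tilde{B}\,s(\tilde{B})\,N(\tilde{B})^{-1}\|<m,$$ then the sequence $(x^{(k)})$ converges and its limit $x=\lim_k x^{(k)}$ is a solution of $Ax=b$.
   Context: $\|\cdot\|_1$ denotes the $\ell_1$-norm of a vector. The $x_2$-update is the iterative method of Wheaton–Awoniyi applied to $\tilde{B}y=b-Bx_1^{(k)}$, and the $x_1$-update is one Jacobi step for $Bz=b-\tilde{B}x_2^{(k+1)}$ starting at $x_1^{(k)}$. *)

From HB Require Import structures.
From mathcomp Require Import all_boot all_order all_algebra.
From mathcomp Require Import all_classical all_reals all_analysis.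
Set Implicit Arguments. Unset Strict Implicit. Unset Printing Implicit Defensive.
Import Order.TTheory GRing.Theory Num.Theory.
Import numFieldNormedType.Exports.
Local Open Scope ring_scope.

Section GJ.
Variables (R : realType) (m p : nat).

Definition is_matrix_norm (nu : 'M[R]_m -> R) : Prop :=
  [/\ forall M, 0 <= nu M,
      forall M, nu M = 0 -> M = 0,
      forall (a : R) M, nu (a *: M) = `|a| * nu M,
      forall M N, nu (M + N) <= nu M + nu N
    & forall M N, nu (M *m N) <= nu M * nu N].

Definition diagpart (B : 'M[R]_m) : 'M[R]_m := diag_mx (\row_i B i i).

Definition row_l1 (Bt : 'M[R]_(m, p)) (i : 'I_m) : R := \sum_j `|Bt i j|.

Definition Nmat (Bt : 'M[R]_(m, p)) : 'M[R]_m := diag_mx (\row_i row_l1 Bt i).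

Definition smat (Bt : 'M[R]_(m, p)) : 'M[R]_(p, m) := \matrix_(j, i) Num.sg (Bt i j).

Definition gj_step (B : 'M[R]_m) (Bt : 'M[R]_(m, p)) (b : 'cV[R]_m)
    (x : 'cV[R]_m * 'cV[R]_p) : 'cV[R]_m * 'cV[R]_p :=
  let x1 := x.1 in let x2 := x.2 in
  let d : 'cV[R]_m := \col_i ((b i 0 - (B *m x1) i 0 - (Bt *m x2) i 0)
                              / (m%:R * row_l1 Bt i)) in
  let x2' := x2 + smat Bt *m d in
  let x1' := invmx (diagpart B) *m (- (B - diagpart B) *m x1 + b - Bt *m x2') in
  (x1', x2').

Definition gj_iter B Bt b (x0 : 'cV[R]_m * 'cV[R]_p) (k : nat) : 'cV[R]_(m + p) :=
  let x := iter k (gj_step B Bt b) x0 in col_mx x.1 x.2.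

End GJ.

From HB Require Import structures.
From mathcomp Require Import all_boot all_order all_algebra.
From mathcomp Require Import all_classical all_reals all_analysis.
From mathcomp Require Import ring lra.
Import Order.TTheory GRing.Theory Num.Theory.
Import numFieldNormedType.Exports.
Local Open Scope classical_set_scope.
Local Open Scope ring_scope.

(* Write r = b - A x for the residual of x = (x1, x2), where A = [B Bt]. One
   step of the iteration is x |-> x + G r, and it maps r to C r, with
   C = (I - B D^-1) (I - Bt s(Bt) N(Bt)^-1 / m) and A G = I - C. The two norm
   hypotheses give nu C < 1, so r_k -> 0 geometrically and I - C is invertible.
   Since x_k + G (I - C)^-1 r_k does not depend on k, x_k converges to
   x_0 + G (I - C)^-1 r_0, and A applied to this limit is A x_0 + r_0 = b.
   To pass from nu to entrywise convergence we use that a submultiplicative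
   norm dominates the max-entry norm:
   |M a c| nu (E a c) = nu (E a a M E c c) <= nu (E a a) nu M nu (E c c). *)

Section DiagonalMatrix.
Variables (F : fieldType) (n : nat) (d : 'rV[F]_n).
Hypothesis d_neq0 : forall i, d 0 i != 0.

Lemma unitmx_diag : diag_mx d \in unitmx.
Proof. by rewrite unitmxE det_diag unitfE; apply/prodf_neq0 => i _. Qed.

Lemma invmx_diag : invmx (diag_mx d) = diag_mx (\row_i (d 0 i)^-1).
Proof.
have dV : diag_mx d *m diag_mx (\row_i (d 0 i)^-1) = 1%:M.
  by rewrite mulmx_diag -diag_const_mx; congr diag_mx; apply/rowP => i; rewrite !mxE divff.
by rewrite -[LHS]mulmx1 -dV mulKmx // unitmx_diag.
Qed.

End DiagonalMatrix.

Lemma delta_mx_sandwich (R : pzRingType) m n (M : 'M[R]_(m, n)) a c :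
  delta_mx a a *m M *m delta_mx c c = M a c *: delta_mx a c.
Proof.
apply/matrixP => i j; rewrite !mxE (bigD1 c) //= big1 => [|k /negbTE kc]; last first.
  by rewrite !mxE kc mulr0.
rewrite !mxE (bigD1 a) //= big1 => [|k /negbTE ka]; last by rewrite !mxE ka andbF mul0r.
rewrite !mxE !eqxx /= andbT.
by case: (i == a); case: (j == c); rewrite /= ?(mulr1, mul1r, mulr0, mul0r, addr0).
Qed.

Section EntrywiseNorm.
Context {K : realDomainType}.

Lemma ler_mx_entry {m n} (M : 'M[K]_(m, n)) i j : `|M i j| <= `|M|.
Proof.
by rewrite [leRHS]/Num.norm /= mx_normrE (le_bigmax _ (fun ij => `|M ij.1 ij.2|) (i, j)).
Qed.

Lemma mx_norm_le {m n} (M : 'M[K]_(m, n)) c :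
  0 <= c -> (forall i j, `|M i j| <= c) -> `|M| <= c.
Proof. by move=> c0 Mc; rewrite [leLHS]/Num.norm /= mx_normrE; apply: bigmax_le => // -[i j] _. Qed.

Lemma mx_norm_mulmx_le {m n p} (M : 'M[K]_(m, n)) (N : 'M[K]_(n, p)) :
  `|M *m N| <= `|M| * `|N| *+ n.
Proof.
apply: mx_norm_le => [|i j]; first by rewrite mulrn_wge0 ?mulr_ge0.
rewrite mxE; apply: le_trans (ler_norm_sum _ _ _) _.
apply: le_trans (_ : _ <= \sum_(k < n) `|M| * `|N|) _; last by rewrite sumr_const card_ord.
by apply: ler_sum => k _; rewrite normrM ler_pM ?ler_mx_entry.
Qed.

End EntrywiseNorm.

Section Convergence.
Context {R : realType} {T : Type} {F : set_system T} {FF : Filter F}.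

Lemma cvg0_norm_le {V : normedModType R} [f : T -> V] [g : T -> R] :
  (forall t, `|f t| <= g t) -> g @ F --> 0 -> f @ F --> 0.
Proof.
move=> fg g0; apply/norm_cvg0P; apply: (squeeze_cvgr _ (cvg_cst 0) g0).
by apply: nearW => t; rewrite normr_ge0 fg.
Qed.

Lemma mulmx_cvg0 {m n p} (M : 'M[R]_(m, n)) (v : T -> 'M[R]_(n, p)) :
  v @ F --> (0 : 'M[R]_(n, p)) -> (fun t => M *m v t) @ F --> (0 : 'M[R]_(m, p)).
Proof.
move=> v0; apply: (cvg0_norm_le (g := fun t => `|M| *+ n * `|v t|)).
  by move=> t; rewrite mulrnAl mx_norm_mulmx_le.
by rewrite -(mulr0 (`|M| *+ n)); apply: cvgMl_tmp; apply/norm_cvg0P.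
Qed.

End Convergence.

Section SubmultiplicativeNorm.
Context {R : realType} {m : nat} {nu : 'M[R]_m -> R}.
Hypothesis nu_norm : is_matrix_norm nu.

Lemma mx_norm_le_matrix_norm : exists2 K, 0 <= K & forall M, `|M| <= K * nu M.
Proof.
case: nu_norm => nu_ge0 nu_eq0 nuZ _ nuM.
have nu_delta_gt0 a c : 0 < nu (delta_mx a c).
  rewrite lt_def nu_ge0 andbT; apply/eqP => /nu_eq0/matrixP/(_ a c)/eqP.
  by rewrite !mxE !eqxx oner_eq0.
pose kappa := \matrix_(a, c) (nu (delta_mx a a) * nu (delta_mx c c) / nu (delta_mx a c)).
exists `|kappa|; first exact: normr_ge0.
move=> M; apply: mx_norm_le => [|a c]; first by rewrite mulr_ge0 ?nu_ge0.
have : `|M a c| * nu (delta_mx a c) <= nu (delta_mx a a) * nu M * nu (delta_mx c c).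
  rewrite -nuZ -delta_mx_sandwich; apply: le_trans (nuM _ _) _.
  by rewrite ler_wpM2r ?nu_ge0 ?nuM.
rewrite -ler_pdivlMr // => /le_trans; apply.
have -> : nu (delta_mx a a) * nu M * nu (delta_mx c c) / nu (delta_mx a c) = kappa a c * nu M.
  by rewrite mxE; ring.
by rewrite ler_wpM2r ?nu_ge0 // (le_trans (ler_norm _) (ler_mx_entry kappa a c)).
Qed.

Lemma unitmx1B_norm_lt1 {C} : nu C < 1 -> 1%:M - C \in unitmx.
Proof.
case: nu_norm => nu_ge0 nu_eq0 _ _ nuM nuC.
rewrite unitmxE unitfE; apply/negP => /det0P [v v_neq0 v1C].
pose V : 'M[R]_m := const_mx 1 *m v.
have VC : V *m C = V.
  by apply/eqP; rewrite eq_sym -subr_eq0 -{1}[V]mulmx1 -mulmxBr -mulmxA v1C mulmx0.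
have nuV : nu V = 0.
  by apply/eqP; rewrite eq_le nu_ge0 andbT; have := nuM V C; rewrite VC; have := nu_ge0 V; nra.
move/negP: v_neq0; apply; apply/eqP/rowP => j.
by have /matrixP/(_ j j) := nu_eq0 _ nuV; rewrite !mxE big_ord1 !mxE mul1r.
Qed.

Lemma mx_orbit_cvg0 {C} {r : nat -> 'cV[R]_m} :
  nu C < 1 -> (forall k, r k.+1 = C *m r k) -> r @ \oo --> (0 : 'cV[R]_m).
Proof.
case: nu_norm => nu_ge0 _ _ _ nuM nuC rS.
have [K K_ge0 normK] := mx_norm_le_matrix_norm.
pose W k : 'M[R]_m := r k *m const_mx 1.
have nuW k : nu (W k) <= nu C ^+ k * nu (W 0).
  elim: k => [|k IH]; first by rewrite expr0 mul1r.
  rewrite /W rS -mulmxA exprS -mulrA; apply: le_trans (nuM _ _) _.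
  by rewrite ler_wpM2l ?nu_ge0.
apply: (cvg0_norm_le (g := fun k => K * nu (W 0) * nu C ^+ k)).
  move=> k; apply: le_trans (_ : `|r k| <= `|W k|) _.
    apply: mx_norm_le => // i j; rewrite (ord1 j).
    by apply: le_trans (ler_mx_entry (W k) i i); rewrite !mxE big_ord1 !mxE mulr1.
  by apply: le_trans (normK _) _; rewrite -mulrA ler_wpM2l // mulrC.
by rewrite -(mulr0 (K * nu (W 0))); apply: cvgMl_tmp; apply: cvg_expr; rewrite ger0_norm.
Qed.

End SubmultiplicativeNorm.

Lemma residual_iteration_cvg {R : realType} {n m} {C : 'M[R]_m} {G : 'M[R]_(n, m)}
    (x : nat -> 'cV[R]_n) (r : nat -> 'cV[R]_m) :
    1%:M - C \in unitmx ->
    (forall k, x k.+1 = x k + G *m r k) -> (forall k, r k.+1 = C *m r k) ->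
    r @ \oo --> (0 : 'cV[R]_m) ->
  x @ \oo --> x 0 + G *m (invmx (1%:M - C) *m r 0).
Proof.
move=> unit_1C xS rS r0; set Q := invmx (1%:M - C).
have QC : Q *m C = Q - 1%:M.
  have /eqP := mulVmx unit_1C.
  by rewrite mulmxBr mulmx1 -/Q subr_eq addrC -subr_eq eq_sym => /eqP.
set L := x 0 + _.
have conserved k : x k + G *m (Q *m r k) = L.
  elim: k => [//|k <-]; rewrite xS rS [Q *m _]mulmxA QC mulmxBl mul1mx mulmxBr -addrA.
  by congr (_ + _); rewrite addrC subrK.
have -> : x = fun k => L - G *m (Q *m r k).
  by apply/funext => k; rewrite -(conserved k) addrK.
rewrite -[L in _ --> L]subr0; apply: (cvgB (cvg_cst _)).
by do 2 apply: mulmx_cvg0.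
Qed.

Section GeneralizedJacobi.
Context {R : realType} {m p : nat} (B : 'M[R]_m) (Bt : 'M[R]_(m, p)) (b : 'cV[R]_m).

Definition gj_residual (x : 'cV[R]_m * 'cV[R]_p) : 'cV[R]_m :=
  b - row_mx B Bt *m col_mx x.1 x.2.

Definition gj_x2_gain : 'M[R]_(p, m) := (m%:R)^-1 *: (smat Bt *m invmx (Nmat Bt)).

Definition gj_x2_residual_map : 'M[R]_m := 1%:M - Bt *m gj_x2_gain.

Definition gj_gain : 'M[R]_(m + p, m) :=
  col_mx (invmx (diagpart B) *m gj_x2_residual_map) gj_x2_gain.

Definition gj_contraction : 'M[R]_m :=
  (1%:M - B *m invmx (diagpart B)) *m gj_x2_residual_map.

Lemma mulmx_gj_gain : row_mx B Bt *m gj_gain = 1%:M - gj_contraction.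
Proof.
rewrite mul_row_col /gj_contraction mulmxBl mul1mx mulmxA.
have -> : Bt *m gj_x2_gain = 1%:M - gj_x2_residual_map by rewrite opprB addrC subrK.
by rewrite [in RHS]opprB addrCA.
Qed.

Hypotheses (m_gt0 : (0 < m)%N) (B_diag_neq0 : forall i, B i i != 0)
  (Bt_row_neq0 : forall i, exists j, Bt i j != 0).

Lemma row_l1_neq0 i : row_l1 Bt i != 0.
Proof.
have [j Bij] := Bt_row_neq0 i; rewrite psumr_neq0 => [|k _]; last exact: normr_ge0.
by apply/hasP; exists j; rewrite ?mem_index_enum ?normr_gt0.
Qed.

Lemma gj_step_eq x :
  gj_step B Bt b x = (x.1 + invmx (diagpart B) *m (gj_x2_residual_map *m gj_residual x),
                      x.2 + gj_x2_gain *m gj_residual x).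
Proof.
have D_unit : diagpart B \in unitmx by apply: unitmx_diag => i; rewrite mxE.
set r := gj_residual x.
have d_eq : \col_i ((b i 0 - (B *m x.1) i 0 - (Bt *m x.2) i 0) / (m%:R * row_l1 Bt i))
    = (m%:R)^-1 *: (invmx (Nmat Bt) *m r).
  rewrite /Nmat invmx_diag => [|i]; last by rewrite mxE row_l1_neq0.
  apply/colP => i; rewrite mul_diag_mx /r /gj_residual mul_row_col !mxE.
  have m_neq0 : (m%:R : R) != 0 by rewrite pnatr_eq0 -lt0n.
  by field; rewrite m_neq0 row_l1_neq0.
rewrite /gj_step /= d_eq -scalemxAr mulmxA scalemxAl -/gj_x2_gain; congr (_, _).
rewrite -{2}[x.1](mulKmx D_unit) -mulmxDr; congr (_ *m _).
rewrite /gj_x2_residual_map mulmxBl mul1mx -mulmxA mulmxDr.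
set u := Bt *m (gj_x2_gain *m r).
rewrite /r /gj_residual mul_row_col mulNmx mulmxBl.
move: (B *m x.1) (diagpart B *m x.1) (Bt *m x.2) u => P Q S U.
by apply/matrixP => i j; rewrite !mxE; ring.
Qed.

Lemma gj_step_col x :
  col_mx (gj_step B Bt b x).1 (gj_step B Bt b x).2 = col_mx x.1 x.2 + gj_gain *m gj_residual x.
Proof. by rewrite gj_step_eq mul_col_mx add_col_mx mulmxA. Qed.

Lemma gj_residual_step x : gj_residual (gj_step B Bt b x) = gj_contraction *m gj_residual x.
Proof.
rewrite {1}/gj_residual gj_step_col mulmxDr opprD addrA -/(gj_residual x).
by rewrite mulmxA mulmx_gj_gain mulmxBl mul1mx opprB addrC subrK.
Qed.

Lemma gj_contraction_lt1 {nu : 'M[R]_m -> R} : is_matrix_norm nu ->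
  nu (1%:M - B *m invmx (diagpart B)) < 1 ->
  nu (m%:R%:M - Bt *m smat Bt *m invmx (Nmat Bt)) < m%:R ->
  nu gj_contraction < 1.
Proof.
case=> nu_ge0 _ nuZ _ nuM nu_Jacobi nu_sign.
have m_pos : (0 : R) < m%:R by rewrite ltr0n.
have nu_map_lt1 : nu gj_x2_residual_map < 1.
  have -> : gj_x2_residual_map = (m%:R)^-1 *: (m%:R%:M - Bt *m smat Bt *m invmx (Nmat Bt)).
    rewrite scalerBr scale_scalar_mx mulVf ?gt_eqF //.
    by rewrite /gj_x2_residual_map /gj_x2_gain -scalemxAr mulmxA.
  by rewrite nuZ ger0_norm ?invr_ge0 ?ltW // ltr_pdivrMl // mulr1.
have := nuM (1%:M - B *m invmx (diagpart B)) gj_x2_residual_map.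
have := nu_ge0 (1%:M - B *m invmx (diagpart B)); have := nu_ge0 gj_x2_residual_map.
rewrite -/gj_contraction; nra.
Qed.

End GeneralizedJacobi.

Theorem mainTheorem1 (R : realType) (m p : nat) (hp : (0 < p)%N)
    (B : 'M[R]_m) (Bt : 'M[R]_(m, p)) (b : 'cV[R]_m)
    (hsol : exists x : 'cV[R]_(m + p), row_mx B Bt *m x = b)
    (hdiag : forall i : 'I_m, B i i != 0)
    (hrow : forall i : 'I_m, exists j : 'I_p, Bt i j != 0)
    (nu : 'M[R]_m -> R) (hnu : is_matrix_norm nu)
    (h1 : nu (1%:M - B *m invmx (diagpart B)) < 1)
    (h2 : nu (m%:R%:M - Bt *m smat Bt *m invmx (Nmat Bt)) < m%:R)
    (x0 : 'cV[R]_m * 'cV[R]_p) :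
  exists xlim : 'cV[R]_(m + p),
    gj_iter B Bt b x0 @ \oo --> xlim /\ row_mx B Bt *m xlim = b.
Proof.
have m_gt0 : (0 < m)%N.
  by case: hnu => nu_ge0 _ _ _ _; rewrite -(ltr0n R); apply: le_lt_trans (nu_ge0 _) h2.
have C_lt1 := gj_contraction_lt1 B Bt m_gt0 hnu h1 h2.
pose r k := gj_residual B Bt b (iter k (gj_step B Bt b) x0).
have rS k : r k.+1 = gj_contraction B Bt *m r k by apply: gj_residual_step.
have unit_1C := unitmx1B_norm_lt1 hnu C_lt1.
have := residual_iteration_cvg (gj_iter B Bt b x0) r unit_1C
  (fun k => gj_step_col B Bt b m_gt0 hdiag hrow _) rS (mx_orbit_cvg0 hnu C_lt1 rS).
set xlim := _ + _ => xlim_cvg; exists xlim; split => //.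
rewrite mulmxDr mulmxA mulmx_gj_gain mulKVmx //.
by rewrite /r /gj_residual addrC subrK.
Qed.
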